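(* Let $R\to R'$ be a homomorphism of commutative Noetherian $\mathbb{Z}[\frac1p,\zeta_p]$-algebras and let $(\rho,V)$ be an $R[G_n]$-module of $\psi$-Whittaker type. Then $(\rho\otimes_RR',V\otimes_RR')$ is of $\psi$-Whittaker type and $\mathcal{W}(V\otimes_RR',\psi_{R'})=\mathcal{W}(V,\psi_R)\otimes_RR'$, i.e. the Whittaker model of $V\otimes_RR'$ is the image of $\mathcal{W}(V,\psi_R)\otimes_RR'$ under the natural identification $\mathrm{Ind}_{N_n}^{G_n}\psi_R\otimes_RR'\cong\mathrm{Ind}_{N_n}^{G_n}\psi_{R'}$.
   Context: Let $p$ be a prime, $q$ a power of $p$, $G_n=\mathrm{GL}_n(\mathbb{F}_q)$, $N_n$ the upper unipotent subgroup. Fix nontrivial $\psi:(\mathbb{F}_q,+)\to\mathbb{Z}[\frac1p,\zeta_p]^\times$; for an algebra $R$, $\psi_R$ is its image in $R^\times$, a character of $N_n$ via $u\mapsto\psi_R(\sum_iu_{i,i+1})$. $\mathrm{Ind}_{N_n}^{G_n}\psi_R=\{f:G_n\to R:f(ug)=\psi_R(u)f(g)\}$. An $R[G_n]$-module $V$ is of $\psi$-Whittaker type if its $(N_n,\psi_R)$-coinvariants $V_{N_n,\psi_R}$ (its $n$-th derivative) form a free $R$-module of rank one; then a generator $\lambda$ of $\mathrm{Hom}_R(V_{N_n,\psi_R},R)$ gives $V\to\mathrm{Ind}_{N_n}^{G_n}\psi_R$, $v\mapsto(g\mapsto\lambda(\overline{gv}))$, whose image (independent of $\lambda$) is the Whittaker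 model $\mathcal{W}(V,\psi_R)$. *)

From HB Require Import structures.
From mathcomp Require Import all_boot all_order all_algebra all_fingroup all_field.
From mathcomp Require Import boolp.
Set Implicit Arguments. Unset Strict Implicit. Unset Printing Implicit Defensive.
Import GRing.Theory.
Local Open Scope ring_scope.

(* The coefficient ring Z[1/p, zeta_p], as the smallest subring of the *)
(* algebraic complex numbers containing 1/p and a primitive p-th root   *)
(* of unity zeta_p.                                                     *)

Definition zeta_p (p : nat) : algC := sval (C_prim_root_exists (ltn0Sn p.-1)).

Definition subring_Prop (S : algC -> Prop) : Prop :=
  [/\ S 1, (forall x y, S x -> S y -> S (x - y)) & (forall x y, S x -> S y -> S (x * y))].

Definition Zpz_pred (p : nat) : pred algC := fun x =>
  `[< forall S : algC -> Prop, subring_Prop S -> S (p%:R^-1) -> S (zeta_p p) -> S x >].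

Lemma Zpz_subring_closed (p : nat) : GRing.subring_closed (Zpz_pred p).
Proof.
split.
- by apply/asboolP => S [S1 _ _].
- move=> x y /asboolP Hx /asboolP Hy; apply/asboolP => S HS Sp Sz.
  by case: HS (HS) => _ HB _ HS; apply: HB; [apply: Hx|apply: Hy].
- move=> x y /asboolP Hx /asboolP Hy; apply/asboolP => S HS Sp Sz.
  by case: HS (HS) => _ _ HM HS; apply: HM; [apply: Hx|apply: Hy].
Qed.

HB.instance Definition _ (p : nat) :=
  GRing.isSubringClosed.Build algC (Zpz_pred p) (Zpz_subring_closed p).

Record Zpz (p : nat) := MkZpz { zpz_val :> algC; _ : zpz_val \in Zpz_pred p }.

HB.instance Definition _ (p : nat) := [isSub for @zpz_val p].
HB.instance Definition _ (p : nat) := [Choice of Zpz p by <:].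
HB.instance Definition _ (p : nat) := [SubChoice_isSubComNzRing of Zpz p by <:].

Definition ideal_Prop (R : comPzRingType) (I : R -> Prop) : Prop :=
  [/\ I 0, (forall x y, I x -> I y -> I (x + y)) & (forall r x, I x -> I (r * x))].

Definition noetherian (R : comPzRingType) : Prop :=
  forall I : R -> Prop, ideal_Prop I ->
    exists (k : nat) (gen : 'I_k -> R),
      forall x, I x <-> exists c : 'I_k -> R, x = \sum_(i < k) c i * gen i.

Definition additive_char (F : finFieldType) (A : pzRingType) (psi : F -> A) : Prop :=
  psi 0 = 1 /\ forall a b, psi (a + b) = psi a * psi b.

Definition psi_ring (p : nat) (F : finFieldType) (R : comPzRingType)
  (phiR : {rmorphism Zpz p -> R}) (psi : F -> Zpz p) : F -> R :=
  fun a => phiR (psi a).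

(* G_n = GL_n(F) with n = m.+1 >= 1; N_n = upper unipotent matrices. *)
Definition upper_unipotent (F : finFieldType) (m : nat) (u : {'GL_m.+1[F]}) : bool :=
  [forall i : 'I_m.+1, forall j : 'I_m.+1,
     ((j < i)%N ==> (GLval u i j == 0)) && ((i == j) ==> (GLval u i j == 1))].

Definition psiN (F : finFieldType) (m : nat) (R : comPzRingType) (psiR : F -> R)
  (u : {'GL_m.+1[F]}) : R :=
  psiR (\sum_(i < m.+1 | (i.+1 < m.+1)%N) GLval u i (inord i.+1)).

Definition is_rep (F : finFieldType) (m : nat) (R : comPzRingType) (V : lmodType R)
  (rho : {'GL_m.+1[F]} -> V -> V) : Prop :=
  [/\ forall g r v w, rho g (r *: v + w) = r *: rho g v + rho g w,
      forall v, rho 1%g v = v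
    & forall g h v, rho (g * h)%g v = rho g (rho h v)].

(* v lies in the R-span of { rho(u) w - psi_R(u) w : u in N_n, w in V },  *)
(* i.e. v is zero in the (N_n, psi_R)-coinvariants V_{N_n,psi_R}.         *)
Definition in_twisted_span (F : finFieldType) (m : nat) (R : comPzRingType)
  (V : lmodType R) (rho : {'GL_m.+1[F]} -> V -> V) (psiR : F -> R) (v : V) : Prop :=
  exists (k : nat) (c : 'I_k -> R) (u : 'I_k -> {'GL_m.+1[F]}) (w : 'I_k -> V),
    (forall i, upper_unipotent (u i)) /\
    v = \sum_(i < k) c i *: (rho (u i) (w i) - psiN psiR (u i) *: w i).

(* V is of psi-Whittaker type: V_{N_n,psi_R} = V / (twisted span) is a free *)
(* R-module of rank one, i.e. it has a basis element, the class of some e. *)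
Definition whittaker_type (F : finFieldType) (m : nat) (R : comPzRingType)
  (V : lmodType R) (rho : {'GL_m.+1[F]} -> V -> V) (psiR : F -> R) : Prop :=
  exists e : V, forall v : V, exists! r : R, in_twisted_span rho psiR (v - r *: e).

(* Elements of Hom_R(V_{N_n,psi_R}, R), seen as R-linear functionals on V *)
(* vanishing on the twisted span.                                          *)
Definition coinv_functional (F : finFieldType) (m : nat) (R : comPzRingType)
  (V : lmodType R) (rho : {'GL_m.+1[F]} -> V -> V) (psiR : F -> R) (lam : V -> R) : Prop :=
  (forall r v w, lam (r *: v + w) = r * lam v + lam w) /\
  (forall v, in_twisted_span rho psiR v -> lam v = 0).

Definition coinv_generator (F : finFieldType) (m : nat) (R : comPzRingType)
  (V : lmodType R) (rho : {'GL_m.+1[F]} -> V -> V) (psiR : F -> R) (lam : V -> R) : Prop :=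
  coinv_functional rho psiR lam /\
  forall mu, coinv_functional rho psiR mu -> exists c : R, forall v, mu v = c * lam v.

(* The Whittaker model W(V, psi_R) inside Ind_{N_n}^{G_n} psi_R (functions  *)
(* G_n -> R): the image of v |-> (g |-> lam (rho g v)) for a generator lam *)
(* (the image does not depend on the generator).                           *)
Definition whittaker_model (F : finFieldType) (m : nat) (R : comPzRingType)
  (V : lmodType R) (rho : {'GL_m.+1[F]} -> V -> V) (psiR : F -> R)
  (W : {'GL_m.+1[F]} -> R) : Prop :=
  exists lam, coinv_generator rho psiR lam /\
  exists v : V, forall g, W g = lam (rho g v).

Definition semilinear_along (R R' : comPzRingType) (f : R -> R') (V : lmodType R)
  (M : lmodType R') (phi : V -> M) : Prop :=
  forall r v w, phi (r *: v + w) = f r *: phi v + phi w.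

Definition R_linear (R' : comPzRingType) (V' M : lmodType R') (phi : V' -> M) : Prop :=
  forall r v w, phi (r *: v + w) = r *: phi v + phi w.

(* (V', iota) is a tensor product V ⊗_R R' with iota v = v ⊗ 1. *)
Definition is_base_change (R R' : comPzRingType) (f : R -> R') (V : lmodType R)
  (V' : lmodType R') (iota : V -> V') : Prop :=
  semilinear_along f iota /\
  forall (M : lmodType R') (phi : V -> M), semilinear_along f phi ->
    exists phi' : V' -> M,
      [/\ R_linear phi', (forall v, phi' (iota v) = phi v)
        & forall phi'' : V' -> M, R_linear phi'' ->
            (forall v, phi'' (iota v) = phi v) -> forall x, phi'' x = phi' x].

(* Taking (N_n, psi)-coinvariants commutes with base change: the twisted span of
   V ⊗ R' is generated by the image of the twisted span of V.  Hence a coordinate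
   functional lam on V (lam e = 1, and v - lam(v) e in the twisted span) extends
   along iota to a coordinate functional lam' on V ⊗ R' with lam'(iota e) = 1.
   Whittaker functions of V ⊗ R' are g |-> lam'(rho'(g) v'); writing v' as an
   R'-combination of vectors iota(x_i) turns them into R'-combinations of the
   Whittaker functions g |-> lam(rho(g) x_i) of V, and conversely. *)

From HB Require Import structures.
From mathcomp Require Import all_boot all_order all_algebra all_fingroup all_field.
From mathcomp Require Import boolp.
Set Implicit Arguments. Unset Strict Implicit. Unset Printing Implicit Defensive.
Import GRing.Theory.
Local Open Scope ring_scope.

Definition ord_concat (T : Type) k1 k2 (a : 'I_k1 -> T) (b : 'I_k2 -> T)
  (i : 'I_(k1 + k2)) : T :=
  match split i with inl j => a j | inr j => b j end.

Lemma sum_ord_concat (M : nmodType) k1 k2 (a : 'I_k1 -> M) (b : 'I_k2 -> M) :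
  \sum_(i < k1 + k2) ord_concat a b i = \sum_(i < k1) a i + \sum_(i < k2) b i.
Proof.
rewrite big_split_ord /ord_concat; congr (_ + _); apply: eq_bigr => i _.
  by rewrite (unsplitK (inl _ i)).
by rewrite (unsplitK (inr _ i)).
Qed.

Section Submodules.
Variables (R : comPzRingType) (V : lmodType R).

Definition submodule_Prop (Q : V -> Prop) : Prop :=
  [/\ Q 0, (forall x y, Q x -> Q y -> Q (x + y)) & (forall a x, Q x -> Q (a *: x))].

Lemma submodule_sum (Q : V -> Prop) k (x : 'I_k -> V) :
  submodule_Prop Q -> (forall i, Q (x i)) -> Q (\sum_(i < k) x i).
Proof.
move=> [Q0 QD _] Qx; elim: k x Qx => [|k IHk] x Qx; first by rewrite big_ord0.
by rewrite big_ord_recr /=; apply: QD => //; apply: IHk.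
Qed.

Lemma submodule_zero : submodule_Prop (fun x : V => x = 0).
Proof. by split=> [|x y -> ->|a x ->]; rewrite ?addr0 ?scaler0. Qed.

Definition in_span (T : Type) (h : T -> V) (v : V) : Prop :=
  exists k (c : 'I_k -> R) (x : 'I_k -> T), v = \sum_(i < k) c i *: h (x i).

Variables (T : Type) (h : T -> V).

Lemma in_span_gen t : in_span h (h t).
Proof. by exists 1%N, (fun=> 1), (fun=> t); rewrite big_ord1 scale1r. Qed.

Lemma in_span_submodule : submodule_Prop (in_span h).
Proof.
split.
- (* [T] may be empty, so the empty family is built with [ffun0]. *)
  by exists 0%N, (fun=> 0), (ffun0 (card_ord 0)); rewrite big_ord0.
- move=> _ _ [k1 [c1 [x1 ->]]] [k2 [c2 [x2 ->]]].
  exists (k1 + k2)%N, (ord_concat c1 c2), (ord_concat x1 x2).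
  by rewrite -sum_ord_concat; apply: eq_bigr => i _; rewrite /ord_concat; case: split.
- move=> a _ [k [c [x ->]]]; exists k, (fun i => a * c i), x.
  by rewrite scaler_sumr; apply: eq_bigr => i _; rewrite scalerA.
Qed.

Lemma in_span_ind (Q : V -> Prop) :
  submodule_Prop Q -> (forall t, Q (h t)) -> forall v, in_span h v -> Q v.
Proof.
move=> Qsub Qh _ [k [c [x ->]]]; apply: submodule_sum => // i.
by case: Qsub => _ _ QZ; apply: QZ.
Qed.

Definition in_spanb : pred V := fun v => `[< in_span h v >].

Lemma in_spanb_submod_closed : GRing.submod_closed in_spanb.
Proof.
have [S0 SD SZ] := in_span_submodule.
by split=> [|a u v /asboolP Su /asboolP Sv]; apply/asboolP; [|apply: SD; [apply: SZ|]].
Qed.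

End Submodules.

HB.instance Definition _ (R : comPzRingType) (V : lmodType R) (T : Type) (h : T -> V) :=
  GRing.isSubmodClosed.Build R V (in_spanb h) (in_spanb_submod_closed h).

Record span_sub (R : comPzRingType) (V : lmodType R) (T : Type) (h : T -> V) :=
  SpanSub { span_val :> V; _ : span_val \in in_spanb h }.

HB.instance Definition _ R V T h := [isSub for @span_val R V T h].
HB.instance Definition _ R V T h := [Choice of @span_sub R V T h by <:].
HB.instance Definition _ R V T h := [SubChoice_isSubLmodule of @span_sub R V T h by <:].

Section Semilinear.
Variables (R R' : comPzRingType) (g : R -> R') (V : lmodType R) (M : lmodType R').
Variable phi : V -> M.
Hypotheses (phiL : semilinear_along g phi) (g1 : g 1 = 1).

Lemma semilin0 : phi 0 = 0.
Proof.
have := phiL 1 0 0; rewrite scaler0 addr0 g1 scale1r => phi00.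
by apply: (@addrI _ (phi 0)); rewrite addr0 -phi00.
Qed.

Lemma semilinD x y : phi (x + y) = phi x + phi y.
Proof. by rewrite -{1}[x]scale1r phiL g1 scale1r. Qed.

Lemma semilinZ a x : phi (a *: x) = g a *: phi x.
Proof. by rewrite -[a *: x]addr0 phiL semilin0 addr0. Qed.

Lemma semilinB x y : phi (x - y) = phi x - phi y.
Proof. by apply: (@addIr _ (phi y)); rewrite -semilinD subrK addrNK. Qed.

Lemma semilin_sum k (x : 'I_k -> V) : phi (\sum_(i < k) x i) = \sum_(i < k) phi (x i).
Proof.
elim: k x => [|k IHk] x; first by rewrite !big_ord0 semilin0.
by rewrite !big_ord_recr /= semilinD IHk.
Qed.

Lemma submodule_preim (Q : M -> Prop) :
  submodule_Prop Q -> submodule_Prop (fun v => Q (phi v)).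
Proof.
move=> [Q0 QD QZ]; split=> [|x y Qx Qy|a x Qx]; first by rewrite semilin0.
  by rewrite semilinD; apply: QD.
by rewrite semilinZ; apply: QZ.
Qed.

End Semilinear.

Section LinearMaps.
Variables (R : comPzRingType) (V M : lmodType R).

Lemma R_linearB (h1 h2 : V -> M) :
  R_linear h1 -> R_linear h2 -> R_linear (fun v => h1 v - h2 v).
Proof. by move=> h1L h2L r v w; rewrite h1L h2L scalerBr opprD addrACA. Qed.

Lemma R_linear_scaler (c : R) : R_linear (fun v : V => c *: v).
Proof. by move=> r v w; rewrite scalerDr !scalerA mulrC. Qed.

Lemma R_linear_residual (lam : V -> R^o) (e : V) :
  R_linear lam -> R_linear (fun v => v - lam v *: e).
Proof.
move=> lamL r v w; rewrite lamL scalerDl -[r *: lam v]/(r * lam v) -scalerA.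
by rewrite scalerBr opprD addrACA.
Qed.

End LinearMaps.

Section TwistedSpan.
Variables (F : finFieldType) (m : nat) (R : comPzRingType) (V : lmodType R).
Variables (rho : {'GL_m.+1[F]} -> V -> V) (psiR : F -> R).
Local Notation S := (in_twisted_span rho psiR).

Definition twisted_gen u v : V := rho u v - psiN psiR u *: v.

Lemma R_linear_twisted_gen u : R_linear (rho u) -> R_linear (twisted_gen u).
Proof. by move=> rhoL; apply: R_linearB rhoL (R_linear_scaler _). Qed.

Lemma twisted_span_gen u v : upper_unipotent u -> S (twisted_gen u v).
Proof.
by move=> uN; exists 1%N, (fun=> 1), (fun=> u), (fun=> v); rewrite big_ord1 scale1r.
Qed.

Lemma twisted_span_submodule : submodule_Prop S.
Proof.
split.
- exists 0%N, (fun=> 0), (fun=> 1%g), (fun=> 0).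
  by split=> [[]|]; rewrite ?big_ord0.
- move=> _ _ [k1 [c1 [u1 [w1 [u1N ->]]]]] [k2 [c2 [u2 [w2 [u2N ->]]]]].
  exists (k1 + k2)%N, (ord_concat c1 c2), (ord_concat u1 u2), (ord_concat w1 w2).
  split=> [i|]; first by rewrite /ord_concat; case: split.
  by rewrite -sum_ord_concat; apply: eq_bigr => i _; rewrite /ord_concat; case: split.
- move=> a _ [k [c [u [w [uN ->]]]]]; exists k, (fun i => a * c i), u, w.
  by split=> //; rewrite scaler_sumr; apply: eq_bigr => i _; rewrite scalerA.
Qed.

Lemma twisted_span_ind (Q : V -> Prop) : submodule_Prop Q ->
  (forall u v, upper_unipotent u -> Q (twisted_gen u v)) -> forall v, S v -> Q v.
Proof.
move=> Qsub Qgen _ [k [c [u [w [uN ->]]]]]; apply: submodule_sum => // i.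
by case: Qsub => _ _ QZ; apply/QZ/Qgen.
Qed.

(* [lam v] is the coordinate of the image of [v] in the coinvariants V_{N_n,psi},
   with respect to the basis given by the image of [e]. *)
Definition whittaker_coordinate (e : V) (lam : V -> R) : Prop :=
  [/\ coinv_functional rho psiR lam, lam e = 1 & forall v, S (v - lam v *: e)].

Lemma coinv_functional_linear lam :
  coinv_functional rho psiR lam -> R_linear (lam : V -> R^o).
Proof. by case. Qed.

Lemma coinv_functional_decomp e lam mu : (forall v, S (v - lam v *: e)) ->
  coinv_functional rho psiR mu -> forall v, mu v = lam v * mu e.
Proof.
move=> lam_res muF v; have muL := coinv_functional_linear muF.
have := muF.2 _ (lam_res v).
by rewrite (semilinB muL) // (semilinZ muL) // => /eqP; rewrite subr_eq0 => /eqP.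
Qed.

Lemma whittaker_coordinate_generator e lam :
  whittaker_coordinate e lam -> coinv_generator rho psiR lam.
Proof.
move=> [lamF _ lam_res]; split=> // mu muF.
by exists (mu e) => v; rewrite (coinv_functional_decomp lam_res muF) mulrC.
Qed.

Lemma whittaker_typeP :
  whittaker_type rho psiR <-> exists e lam, whittaker_coordinate e lam.
Proof.
have [S0 SD SZ] := twisted_span_submodule.
split=> [[e coord_uniq]|[e [lam [lamF lame lam_res]]]].
- have /choice[lam lam_res] v : exists r, S (v - r *: e).
    by have [r [Sr _]] := coord_uniq v; exists r.
  have lam_uniq v r : S (v - r *: e) -> r = lam v.
    have [r0 [_ r0_uniq]] := coord_uniq v => Sr.
    by rewrite -(r0_uniq _ Sr) (r0_uniq _ (lam_res v)).
  exists e, lam; split; [split|..] => // [r v w|v Sv|].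
  + apply/esym/lam_uniq.
    have -> : r *: v + w - (r * lam v + lam w) *: e = r *: (v - lam v *: e) + (w - lam w *: e).
      by rewrite scalerDl scalerBr scalerA opprD addrACA.
    by apply: SD; [apply: SZ|].
  + by apply/esym/lam_uniq; rewrite scale0r subr0.
  + by apply/esym/lam_uniq; rewrite scale1r subrr.
- have lamL := coinv_functional_linear lamF.
  exists e => v; exists (lam v); split=> // r /lamF.2.
  rewrite (semilinB lamL) // (semilinZ lamL) // lame => /eqP.
  by rewrite subr_eq0 => /eqP ->; apply: mulr1.
Qed.

Lemma whittaker_model_coordinate e lam : (forall g, R_linear (rho g)) ->
  whittaker_coordinate e lam ->
  forall W, whittaker_model rho psiR W <-> exists v, forall g, W g = lam (rho g v).
Proof.
move=> rhoL coord W; have [lamF _ lam_res] := coord.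
have lamL := coinv_functional_linear lamF; split.
- move=> [mu [[muF _] [v WE]]]; exists (mu e *: v) => g.
  rewrite WE (coinv_functional_decomp lam_res muF).
  by rewrite (semilinZ (rhoL g)) // (semilinZ lamL) //; apply: mulrC.
- by move=> [v WE]; exists lam; split; [exact: whittaker_coordinate_generator coord|exists v].
Qed.

End TwistedSpan.

Section TwistedSpanMap.
Variables (F : finFieldType) (m : nat) (R R' : comPzRingType) (f : {rmorphism R -> R'}).
Variables (V : lmodType R) (V' : lmodType R') (phi : V -> V').
Variables (rho : {'GL_m.+1[F]} -> V -> V) (rho' : {'GL_m.+1[F]} -> V' -> V').
Variables (psiR : F -> R) (psiR' : F -> R').
Hypotheses (phiL : semilinear_along f phi)
  (phi_rho : forall g v, rho' g (phi v) = phi (rho g v))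
  (psi_f : forall a, psiR' a = f (psiR a)).

Lemma twisted_gen_map u v :
  phi (twisted_gen rho psiR u v) = twisted_gen rho' psiR' u (phi v).
Proof.
rewrite (semilinB phiL) ?rmorph1 // (semilinZ phiL) ?rmorph1 //.
by rewrite /twisted_gen phi_rho /psiN psi_f.
Qed.

Lemma twisted_span_map v :
  in_twisted_span rho psiR v -> in_twisted_span rho' psiR' (phi v).
Proof.
have S'_preim := submodule_preim phiL (rmorph1 f) (twisted_span_submodule rho' psiR').
apply: (twisted_span_ind S'_preim) => u w uN.
by rewrite twisted_gen_map; apply: twisted_span_gen.
Qed.

End TwistedSpanMap.

Section BaseChange.
Variables (R R' : comPzRingType) (f : {rmorphism R -> R'}).
Variables (V : lmodType R) (V' : lmodType R') (iota : V -> V').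
Hypothesis iota_bc : is_base_change f iota.

Lemma base_change_span v' : in_span iota v'.
Proof.
have [iotaL univ] := iota_bc.
have iota_span v : iota v \in in_spanb iota by apply/asboolP/in_span_gen.
pose phi v : span_sub iota := SpanSub (iota_span v).
have phiL : semilinear_along f phi by move=> r v w; apply: val_inj; rewrite /= iotaL.
have [phi' [phi'L phi'_iota _]] := univ _ phi phiL.
have [id' [_ _ id'_uniq]] := univ _ iota iotaL.
(* [id] and [span_val \o phi'] both extend [iota], so they coincide. *)
have val_phi' x : span_val (phi' x) = id' x.
  apply: (id'_uniq (fun x => span_val (phi' x))) => [r v w|v]; last by rewrite phi'_iota.
  by rewrite phi'L.
suff -> : v' = span_val (phi' v') by apply/asboolP; case: (phi' v').
by rewrite val_phi'; apply: (id'_uniq id).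
Qed.

Lemma base_change_ind (Q : V' -> Prop) :
  submodule_Prop Q -> (forall v, Q (iota v)) -> forall v', Q v'.
Proof. by move=> Qsub Qiota v'; apply: in_span_ind (base_change_span v'). Qed.

Lemma base_change_functional (lam : V -> R^o) : R_linear lam ->
  exists lam' : V' -> R'^o, R_linear lam' /\ forall v, lam' (iota v) = f (lam v).
Proof.
move=> lamL; have flamL : semilinear_along f ((fun v => f (lam v)) : V -> R'^o).
  by move=> r v w; rewrite lamL rmorphD rmorphM.
by have [lam' [lam'L lam'_iota _]] := iota_bc.2 _ _ flamL; exists lam'.
Qed.

Variables (F : finFieldType) (m : nat).
Variables (rho : {'GL_m.+1[F]} -> V -> V) (rho' : {'GL_m.+1[F]} -> V' -> V').
Variables (psiR : F -> R) (psiR' : F -> R').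
Hypotheses (rho'L : forall g, R_linear (rho' g))
  (iota_rho : forall g v, rho' g (iota v) = iota (rho g v))
  (psi_f : forall a, psiR' a = f (psiR a)).

Lemma base_change_whittaker_coordinate e lam :
  whittaker_coordinate rho psiR e lam ->
  exists lam', whittaker_coordinate rho' psiR' (iota e) lam' /\
               forall v, lam' (iota v) = f (lam v).
Proof.
move=> [lamF lame lam_res]; have iotaL := iota_bc.1.
have [lam' [lam'L lam'_iota]] := base_change_functional (coinv_functional_linear lamF).
have lam'_ker := submodule_preim lam'L erefl (submodule_zero _).
have lam'S : forall v', in_twisted_span rho' psiR' v' -> lam' v' = 0.
  apply: (twisted_span_ind lam'_ker) => u w' uN.
  have gen_ker := submodule_preim (R_linear_twisted_gen psiR' (rho'L u)) erefl lam'_ker.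
  move: w'; apply: (base_change_ind gen_ker) => v.
  rewrite -(twisted_gen_map iotaL iota_rho psi_f) lam'_iota lamF.2 ?rmorph0 //.
  exact: twisted_span_gen.
exists lam'; split => //; split => //; first by rewrite lam'_iota lame rmorph1.
have res_S' :=
  submodule_preim (R_linear_residual (iota e) lam'L) erefl (twisted_span_submodule rho' psiR').
apply: (base_change_ind res_S') => v.
rewrite lam'_iota -(semilinZ iotaL) ?rmorph1 // -(semilinB iotaL) ?rmorph1 //.
exact: twisted_span_map iotaL iota_rho psi_f _ (lam_res v).
Qed.

End BaseChange.

Theorem lemma2p13 (p : nat) (F : finFieldType) (m : nat) (psi : F -> Zpz p)
  (R R' : comPzRingType)
  (phiR : {rmorphism Zpz p -> R}) (phiR' : {rmorphism Zpz p -> R'})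
  (f : {rmorphism R -> R'})
  (V : lmodType R) (rho : {'GL_m.+1[F]} -> V -> V)
  (V' : lmodType R') (iota : V -> V') (rho' : {'GL_m.+1[F]} -> V' -> V') :
  prime p -> p \in [pchar F] ->
  additive_char psi -> (exists a, psi a != 1) ->
  noetherian R -> noetherian R' ->
  (forall z, f (phiR z) = phiR' z) ->
  is_rep rho -> whittaker_type rho (psi_ring phiR psi) ->
  is_base_change f iota ->
  is_rep rho' -> (forall g v, rho' g (iota v) = iota (rho g v)) ->
  whittaker_type rho' (psi_ring phiR' psi) /\
  (forall W' : {'GL_m.+1[F]} -> R',
     whittaker_model rho' (psi_ring phiR' psi) W' <->
     exists (k : nat) (c : 'I_k -> R') (w : 'I_k -> {'GL_m.+1[F]} -> R),
       (forall i, whittaker_model rho (psi_ring phiR psi) (w i)) /\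
       (forall g, W' g = \sum_(i < k) c i * f (w i g))).
Proof.
move=> _ _ _ _ _ _ phi_f [rhoL _ _] /whittaker_typeP[e [lam lam_coord]] iota_bc.
move=> [rho'L _ _] iota_rho.
have psi_f a : psi_ring phiR' psi a = f (psi_ring phiR psi a) by rewrite /psi_ring phi_f.
have [lam' [lam'_coord lam'_iota]] :=
  base_change_whittaker_coordinate iota_bc rho'L iota_rho psi_f lam_coord.
split; first by apply/whittaker_typeP; exists (iota e), lam'.
have [lam'F _ _] := lam'_coord; have lam'L := coinv_functional_linear lam'F.
have lam'_rho' g k (c : 'I_k -> R') x :
    lam' (rho' g (\sum_(i < k) c i *: iota (x i))) = \sum_(i < k) c i * f (lam (rho g (x i))).
  rewrite (semilin_sum (rho'L g)) // (semilin_sum lam'L) //; apply: eq_bigr => i _.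
  by rewrite (semilinZ (rho'L g)) // (semilinZ lam'L) // iota_rho lam'_iota.
move=> W'; rewrite (whittaker_model_coordinate rho'L lam'_coord); split.
- move=> [v' W'E]; have [k [c [x v'E]]] := base_change_span iota_bc v'.
  exists k, c, (fun i g => lam (rho g (x i))); split=> [i|g]; last by rewrite W'E v'E lam'_rho'.
  by apply/(whittaker_model_coordinate rhoL lam_coord); exists (x i).
- move=> [k [c [w [w_model W'E]]]].
  have /choice[x xE] i : exists v, forall g, w i g = lam (rho g v).
    by apply/(whittaker_model_coordinate rhoL lam_coord); apply: w_model.
  exists (\sum_(i < k) c i *: iota (x i)) => g.
  by rewrite W'E lam'_rho'; apply: eq_bigr => i _; rewrite xE.
Qed.
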